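(* Let $G$ be a simple algebraic group over an uncountable algebraically closed field, let $C_1,\dots,C_e$ be noncentral conjugacy classes of $G$ and $\Omega=C_1\times\dots\times C_e$. If there is a tuple $(x_1,\dots,x_e)\in\Omega$ such that $\langle x_1,\dots,x_e\rangle$ is Zariski dense in $G$, then generic tuples in $\Omega$ generate a Zariski dense subgroup of $G$; that is, the set of tuples in $\Omega$ generating a Zariski dense subgroup contains the complement in $\Omega$ of a countable union of proper closed subvarieties of $\Omega$.
   Context: $\Omega$ is an irreducible variety. *)

From mathcomp Require Import all_boot all_order all_algebra.
Set Implicit Arguments. Unset Strict Implicit. Unset Printing Implicit Defensive.
Import GRing.Theory.
Local Open Scope ring_scope.

Inductive pexpr (I : Type) (k : Type) : Type :=
| PVar of I
| PConst of k
| PAdd of pexpr I k & pexpr I k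
| PMul of pexpr I k & pexpr I k.

Fixpoint peval (I : Type) (k : comRingType) (v : I -> k) (p : pexpr I k) : k :=
  match p with
  | PVar i => v i
  | PConst c => c
  | PAdd p q => peval v p + peval v q
  | PMul p q => peval v p * peval v q
  end.

(* Z is a Zariski-closed subset of X (relative topology), where points of
   type P are given coordinates by coord : P -> (I -> k). *)
Definition zclosed_in (I P : Type) (k : comRingType) (coord : P -> I -> k)
  (X Z : P -> Prop) : Prop :=
  exists S : pexpr I k -> Prop,
    forall x, Z x <-> (X x /\ forall p, S p -> peval (coord x) p = 0).

Definition irreducible_in (I P : Type) (k : comRingType) (coord : P -> I -> k)
  (X : P -> Prop) : Prop :=
  (exists x, X x) /\
  forall Z1 Z2, zclosed_in coord X Z1 -> zclosed_in coord X Z2 ->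
    (forall x, X x -> Z1 x \/ Z2 x) ->
    (forall x, X x -> Z1 x) \/ (forall x, X x -> Z2 x).

Section Groups.
Variables (k : closedFieldType) (n : nat).

Definition mxcoord (A : 'M[k]_n) : 'I_n * 'I_n -> k := fun ij => A ij.1 ij.2.

Definition mclosed_in (X Z : 'M[k]_n -> Prop) := zclosed_in mxcoord X Z.

Definition is_subgroup (H : 'M[k]_n -> Prop) : Prop :=
  (forall A, H A -> A \in unitmx) /\ H 1%:M /\
  (forall A B, H A -> H B -> H (A *m B)) /\ (forall A, H A -> H (invmx A)).

Definition lin_alg_group (G : 'M[k]_n -> Prop) : Prop :=
  is_subgroup G /\ mclosed_in (fun A => A \in unitmx) G.

(* Simple algebraic group: connected (= irreducible), non-abelian, with no
   nontrivial proper closed connected normal subgroup. *)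
Definition simple_alg_group (G : 'M[k]_n -> Prop) : Prop :=
  [/\ lin_alg_group G,
      irreducible_in mxcoord G,
      exists A B, G A /\ G B /\ A *m B <> B *m A &
      forall N : 'M[k]_n -> Prop,
        is_subgroup N -> (forall A, N A -> G A) -> mclosed_in G N ->
        irreducible_in mxcoord N ->
        (forall g A, G g -> N A -> N (invmx g *m A *m g)) ->
        (forall A, N A -> A = 1%:M) \/ (forall A, G A -> N A)].

Definition conj_class (G : 'M[k]_n -> Prop) (x : 'M[k]_n) : 'M[k]_n -> Prop :=
  fun A => exists g, G g /\ A = invmx g *m x *m g.

Definition noncentral (G : 'M[k]_n -> Prop) (x : 'M[k]_n) : Prop :=
  exists g, G g /\ g *m x <> x *m g.

Inductive gen_sub (e : nat) (xs : 'I_e -> 'M[k]_n) : 'M[k]_n -> Prop :=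
| gen_one : gen_sub xs 1%:M
| gen_gen i : gen_sub xs (xs i)
| gen_mul A B : gen_sub xs A -> gen_sub xs B -> gen_sub xs (A *m B)
| gen_inv A : gen_sub xs A -> gen_sub xs (invmx A).

Definition zdense_in (G H : 'M[k]_n -> Prop) : Prop :=
  forall Z, mclosed_in G Z -> (forall A, H A -> Z A) -> forall A, G A -> Z A.

(* Omega = C_1 x ... x C_e, C_i the class of c i; as a subset of (M_n)^e. *)
Definition Omega (e : nat) (G : 'M[k]_n -> Prop) (c : 'I_e -> 'M[k]_n)
  : ('I_e -> 'M[k]_n) -> Prop :=
  fun t => forall i, conj_class G (c i) (t i).

Definition tcoord (e : nat) (t : 'I_e -> 'M[k]_n) : 'I_e * ('I_n * 'I_n) -> k :=
  fun p => t p.1 p.2.1 p.2.2.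

Definition proper_closed_sub (e : nat) (X Z : ('I_e -> 'M[k]_n) -> Prop) : Prop :=
  zclosed_in (@tcoord e) X Z /\ exists t, X t /\ ~ Z t.

End Groups.

Definition uncountable (T : Type) : Prop :=
  forall f : nat -> T, exists x, forall m, f m <> x.

(* For each d let L_d be a finite list of monomials in the matrix entries,
   chosen so that every polynomial lies in the span of some L_d, and let r_d be
   the largest rank of an evaluation matrix (l (A_i))_(i, l in L_d) with all
   A_i in G.  A subgroup H of G attains r_d on its own families iff every
   linear combination of L_d vanishing on H vanishes on G; hence H is dense iff
   it attains r_d for every d.  For a tuple x in Omega, <x> attains r_d iff
   some r_d x r_d minor of the evaluation matrix of finitely many words in x is
   nonzero.  The entries of words are polynomial in x on Omega, so the common
   zero set Z_d of these minors is closed in Omega; the given dense tuple lies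
   outside every Z_d, and any tuple of Omega outside all Z_d generates a dense
   subgroup. *)

From mathcomp Require Import all_boot all_order all_algebra boolp.
From Stdlib Require List.

Set Implicit Arguments. Unset Strict Implicit. Unset Printing Implicit Defensive.
Import GRing.Theory.
Local Open Scope ring_scope.

Section PolyFun.
Variables (I P : Type) (k : comNzRingType) (coord : P -> I -> k) (X : P -> Prop).

Definition poly_fun (f : P -> k) :=
  exists p, forall x, X x -> f x = peval (coord x) p.

Lemma poly_fun_ext f g : poly_fun f -> (forall x, X x -> f x = g x) -> poly_fun g.
Proof. by move=> [p Ep] fg; exists p => x Xx; rewrite -fg // Ep. Qed.

Lemma poly_fun_cst a : poly_fun (fun=> a).
Proof. by exists (PConst I a). Qed.

Lemma poly_fun_coord i : poly_fun (fun x => coord x i).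
Proof. by exists (PVar k i). Qed.

Lemma poly_fun_add f g : poly_fun f -> poly_fun g -> poly_fun (fun x => f x + g x).
Proof. by move=> [p Ep] [q Eq]; exists (PAdd p q) => x Xx /=; rewrite Ep ?Eq. Qed.

Lemma poly_fun_mul f g : poly_fun f -> poly_fun g -> poly_fun (fun x => f x * g x).
Proof. by move=> [p Ep] [q Eq]; exists (PMul p q) => x Xx /=; rewrite Ep ?Eq. Qed.

Lemma poly_fun_sum (J : Type) (r : seq J) (Q : pred J) (F : J -> P -> k) :
  (forall j, poly_fun (F j)) -> poly_fun (fun x => \sum_(j <- r | Q j) F j x).
Proof.
move=> PF; elim: r => [|j r IH].
  by apply: poly_fun_ext (poly_fun_cst 0) _ => x _; rewrite big_nil.
have PFj : poly_fun (fun x => if Q j then F j x else 0).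
  by case: (Q j); [apply: PF | apply: poly_fun_cst].
apply: poly_fun_ext (poly_fun_add PFj IH) _ => x _.
by rewrite big_cons; case: (Q j); rewrite ?add0r.
Qed.

Lemma poly_fun_prod (J : Type) (r : seq J) (Q : pred J) (F : J -> P -> k) :
  (forall j, poly_fun (F j)) -> poly_fun (fun x => \prod_(j <- r | Q j) F j x).
Proof.
move=> PF; elim: r => [|j r IH].
  by apply: poly_fun_ext (poly_fun_cst 1) _ => x _; rewrite big_nil.
have PFj : poly_fun (fun x => if Q j then F j x else 1).
  by case: (Q j); [apply: PF | apply: poly_fun_cst].
apply: poly_fun_ext (poly_fun_mul PFj IH) _ => x _.
by rewrite big_cons; case: (Q j); rewrite ?mul1r.
Qed.

Lemma poly_fun_det m (B : P -> 'M[k]_m) :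
  (forall i j, poly_fun (fun x => B x i j)) -> poly_fun (fun x => \det (B x)).
Proof.
move=> PB; apply: poly_fun_sum => s.
by apply: poly_fun_mul; [apply: poly_fun_cst | apply: poly_fun_prod].
Qed.

Lemma poly_fun_peval (J : Type) (g : P -> J -> k) (p : pexpr J k) :
  (forall j, poly_fun (fun x => g x j)) -> poly_fun (fun x => peval (g x) p).
Proof.
move=> Pg; elim: p => [j|a|p IHp q IHq|p IHp q IHq] /=.
- exact: Pg.
- exact: poly_fun_cst.
- exact: poly_fun_add.
- exact: poly_fun_mul.
Qed.

Lemma zclosed_zeros (Q : (P -> k) -> Prop) (Z : P -> Prop) :
  (forall q, Q q -> poly_fun q) ->
  (forall x, Z x <-> X x /\ forall q, Q q -> q x = 0) ->
  zclosed_in coord X Z.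
Proof.
move=> PQ defZ.
exists (fun p => exists2 q, Q q & forall x, X x -> q x = peval (coord x) p).
move=> x; rewrite defZ; split=> -[Xx Z0]; split=> //.
  by move=> p [q Qq <-//]; apply: Z0.
by move=> q Qq; have [p Ep] := PQ q Qq; rewrite Ep //; apply: Z0; exists q.
Qed.

End PolyFun.

Section Span.
Variables (P : Type) (k : comNzRingType).
Implicit Types (L : seq (P -> k)) (f g : P -> k).

Definition evrow L (x : P) : 'rV[k]_(size L) := \row_j nth (fun=> 0) L j x.

Definition in_span L f :=
  exists a : 'cV[k]_(size L), forall x, f x = (evrow L x *m a) 0 0.

Lemma evrow_mulE L m (a : 'M_(size L, m)) x j :
  (evrow L x *m a) 0 j = \sum_(l < size L) nth (fun=> 0) L l x * a l j.
Proof. by rewrite mxE; apply: eq_bigr => l _; rewrite mxE. Qed.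

Lemma In_nth L f : List.In f L -> exists j : 'I_(size L), nth (fun=> 0) L j = f.
Proof.
elim: L => //= g L IH [->|/IH [j <-]]; first by exists ord0.
by exists (lift ord0 j).
Qed.

Lemma nth_In L (j : 'I_(size L)) : List.In (nth (fun=> 0) L j) L.
Proof.
case: j => j; elim: L j => //= g L IH [|j] ltjL; [left | right] => //.
exact: IH.
Qed.

Lemma span_ext L f g : in_span L f -> (forall x, f x = g x) -> in_span L g.
Proof. by move=> [a Ea] fg; exists a => x; rewrite -fg. Qed.

Lemma span_mem L f : List.In f L -> in_span L f.
Proof.
move=> /In_nth [j <-]; exists (delta_mx j 0) => x.
by rewrite -colE !mxE.
Qed.

Lemma span_add L f g : in_span L f -> in_span L g -> in_span L (fun x => f x + g x).
Proof. by move=> [a Ea] [b Eb]; exists (a + b) => x; rewrite mulmxDr mxE Ea Eb. Qed.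

Lemma span_scale L c f : in_span L f -> in_span L (fun x => c * f x).
Proof. by move=> [a Ea]; exists (c *: a) => x; rewrite -scalemxAr mxE Ea. Qed.

Lemma span_sum L (J : Type) (r : seq J) (F : J -> P -> k) :
  (forall j, in_span L (F j)) -> in_span L (fun x => \sum_(j <- r) F j x).
Proof.
move=> SF; elim: r => [|j r IH].
  by exists 0 => x; rewrite big_nil mulmx0 mxE.
by apply: span_ext (span_add (SF j) IH) _ => x; rewrite big_cons.
Qed.

Lemma span_trans L L' f :
  (forall j : 'I_(size L), in_span L' (nth (fun=> 0) L j)) ->
  in_span L f -> in_span L' f.
Proof.
move=> SL [a Ea].
have : in_span L' (fun x => \sum_(j < size L) a j 0 * nth (fun=> 0) L j x).
  by apply: span_sum => j; apply: span_scale.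
move=> /span_ext; apply=> x.
by rewrite Ea evrow_mulE; apply: eq_bigr => j _; rewrite mulrC.
Qed.

Lemma span_sub L L' f :
  (forall g, List.In g L -> List.In g L') -> in_span L f -> in_span L' f.
Proof. by move=> sLL'; apply: span_trans => j; apply/span_mem/sLL'/nth_In. Qed.

Lemma span_mul L L' f g :
  (forall f g, List.In f L -> List.In g L -> List.In (fun x => f x * g x) L') ->
  in_span L f -> in_span L g -> in_span L' (fun x => f x * g x).
Proof.
move=> mulLL' [a Ea] [b Eb].
pose Lj j := nth (fun=> 0) L j.
have : in_span L' (fun x => \sum_(i < size L) \sum_(j < size L)
                              a i 0 * b j 0 * (Lj i x * Lj j x)).
  apply: span_sum => i; apply: span_sum => j; apply: span_scale.
  exact/span_mem/mulLL'/nth_In/nth_In.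
move=> /span_ext; apply=> x; rewrite Ea Eb !evrow_mulE mulr_suml.
apply: eq_bigr => i _; rewrite mulr_sumr; apply: eq_bigr => j _.
by rewrite [RHS]mulrACA mulrC.
Qed.

Lemma span_evrow_mul L m (C : 'M_(size L, m)) j :
  in_span L (fun x => (evrow L x *m C) 0 j).
Proof.
by exists (col j C) => x; rewrite !evrow_mulE; apply: eq_bigr => l _; rewrite mxE.
Qed.

Lemma span_poly_fun (I : Type) (coord : P -> I -> k) (X : P -> Prop) L f :
  (forall g, List.In g L -> poly_fun coord X g) -> in_span L f -> poly_fun coord X f.
Proof.
move=> PL [a Ea].
have : poly_fun coord X (fun x => \sum_(l < size L) nth (fun=> 0) L l x * a l 0).
  by apply: poly_fun_sum => l; apply: poly_fun_mul (PL _ (nth_In l)) (poly_fun_cst _ _ _).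
by move=> /poly_fun_ext; apply=> x _; rewrite Ea evrow_mulE.
Qed.

End Span.

Lemma In_mem (T : eqType) (x : T) (s : seq T) : x \in s -> List.In x s.
Proof.
elim: s => //= y s IH; rewrite in_cons => /orP [/eqP->|/IH]; by [left | right].
Qed.

Section Monomials.
Variables (I : finType) (P : Type) (k : comNzRingType) (coord : P -> I -> k).

Fixpoint monomials (d : nat) : seq (P -> k) :=
  if d is d'.+1 then
    List.app (monomials d')
      (List.flat_map (fun f => List.map (fun g x => f x * g x) (monomials d'))
         (monomials d'))
  else (fun=> 1) :: List.map (fun i x => coord x i) (enum I).

Lemma monomials_poly_fun (X : P -> Prop) d f :
  List.In f (monomials d) -> poly_fun coord X f.
Proof.
elim: d f => [|d IH] f /=.
  case=> [<-|/List.in_map_iff [i [<- _]]]; [exact: poly_fun_cst | exact: poly_fun_coord].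
case/List.in_app_iff => [/IH //|/List.in_flat_map [g [Lg /List.in_map_iff [h [<- Lh]]]]].
exact: poly_fun_mul (IH _ Lg) (IH _ Lh).
Qed.

Lemma monomials_sub d d' f :
  (d <= d')%N -> List.In f (monomials d) -> List.In f (monomials d').
Proof.
move=> /subnK <-; elim: (d' - d)%N => // m IH Lf.
by rewrite addSn /=; apply/List.in_app_iff; left; apply: IH.
Qed.

Lemma monomials_mul d f g : List.In f (monomials d) -> List.In g (monomials d) ->
  List.In (fun x => f x * g x) (monomials d.+1).
Proof.
move=> Lf Lg /=; apply/List.in_app_iff; right; apply/List.in_flat_map.
by exists f; split=> //; apply/List.in_map_iff; exists g.
Qed.

Lemma span_monomials_sub d d' f :
  (d <= d')%N -> in_span (monomials d) f -> in_span (monomials d') f.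
Proof. by move=> le_dd'; apply: span_sub => g; apply: monomials_sub. Qed.

Lemma peval_in_span (p : pexpr I k) :
  exists d, in_span (monomials d) (fun x => peval (coord x) p).
Proof.
elim: p => [i|a|p [d1 S1] q [d2 S2]|p [d1 S1] q [d2 S2]] /=.
- exists 0%N; apply: span_mem; right.
  by apply/List.in_map_iff; exists i; split=> //; apply/In_mem; rewrite mem_enum.
- exists 0%N; apply: span_ext (span_scale a (span_mem (List.in_eq _ _))) _ => x.
  exact: mulr1.
- exists (d1 + d2)%N; apply: span_add.
    by apply: span_monomials_sub S1; apply: leq_addr.
  by apply: span_monomials_sub S2; apply: leq_addl.
- exists (d1 + d2).+1%N; apply: (span_mul (@monomials_mul _)).
    by apply: span_monomials_sub S1; apply: leq_addr.
  by apply: span_monomials_sub S2; apply: leq_addl.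
Qed.

End Monomials.

Section Minors.
Variable F : fieldType.

Lemma exists_unit_minor m D (W : 'M[F]_(m, D)) r : \rank W = r ->
  exists (g : 'I_r -> 'I_m) (f : 'I_r -> 'I_D), colsub f (rowsub g W) \in unitmx.
Proof.
move=> <-; pose B := rowsub (maxrankfun W) W.
have fullBT : row_full B^T by rewrite /row_full mxrank_tr; apply: maxrowsub_free.
exists (maxrankfun W), (fullrankfun fullBT).
by rewrite -unitmx_tr trmx_mxsub fullrowsub_unit.
Qed.

Lemma unit_colsub_rank r D (W : 'M[F]_(r, D)) (f : 'I_r -> 'I_D) :
  colsub f W \in unitmx -> (r <= \rank W)%N.
Proof.
rewrite -row_free_unit => /eqP {1}<-.
by rewrite -[W in colsub f W]mulmx1 -mulmx_colsub mxrankM_maxl.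
Qed.

End Minors.

Section MaxRank.
Variables (P : Type) (F : fieldType).
Implicit Types (L : seq (P -> F)) (T : P -> Prop).

Definition evmx L m (xs : 'I_m -> P) : 'M[F]_(m, size L) :=
  \matrix_(i, j) nth (fun=> 0) L j (xs i).

Lemma row_evmx L m (xs : 'I_m -> P) i : row i (evmx L xs) = evrow L (xs i).
Proof. by apply/rowP => j; rewrite !mxE. Qed.

Definition maxrank T L (r : nat) :=
  (exists m (xs : 'I_m -> P), (forall i, T (xs i)) /\ \rank (evmx L xs) = r) /\
  (forall m (xs : 'I_m -> P), (forall i, T (xs i)) -> (\rank (evmx L xs) <= r)%N).

Lemma ex_maxrank T L : exists r, maxrank T L r.
Proof.
pose attained (r : nat) :=
  `[< exists m (xs : 'I_m -> P), (forall i, T (xs i)) /\ \rank (evmx L xs) = r >].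
have attained0 : exists r, attained r.
  exists 0%N; apply/asboolP.
  exists 0%N, (fun i : 'I_0 => False_rect P (notF (ltn_ord i))).
  by split=> [[]//|]; apply/eqP; rewrite -leqn0 rank_leq_row.
have attained_bound r : attained r -> (r <= size L)%N.
  by move=> /asboolP [m [xs [_ <-]]]; apply: rank_leq_col.
case: (ex_maxnP attained0 attained_bound) => r /asboolP attained_r maxr.
exists r; split=> // m xs Txs; apply: maxr; apply/asboolP; by exists m, xs.
Qed.

Lemma maxrank_evrow_sub T L (r m : nat) (xs : 'I_m -> P) x :
  maxrank T L r -> (forall i, T (xs i)) -> \rank (evmx L xs) = r -> T x ->
  (evrow L x <= evmx L xs)%MS.
Proof.
move=> [_ maxr] Txs rk Tx.
pose ys (i : 'I_(m + 1)) := if split i is inl i' then xs i' else x.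
have Tys i : T (ys i) by rewrite /ys; case: (split i).
have ys_col : evmx L ys = col_mx (evmx L xs) (evrow L x).
  by apply/matrixP => i j; rewrite !mxE /ys; case: (split i) => i'; rewrite !mxE.
have sub_col : (evmx L xs <= col_mx (evmx L xs) (evrow L x))%MS.
  by rewrite -addsmxE addsmxSl.
have /geq_leqif := mxrank_leqif_sup sub_col.
rewrite -ys_col rk maxr // => /esym.
by rewrite ys_col col_mx_sub => /andP [].
Qed.

Lemma maxrank_vanish T L (r m : nat) (xs : 'I_m -> P) f :
  maxrank T L r -> (forall i, T (xs i)) -> \rank (evmx L xs) = r ->
  in_span L f -> (forall i, f (xs i) = 0) -> forall x, T x -> f x = 0.
Proof.
move=> maxr Txs rk [a Ea] f0 x Tx.
have xs_a : evmx L xs *m a = 0.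
  apply/matrixP => i j; rewrite ord1 [RHS]mxE -(f0 i) Ea !evrow_mulE mxE.
  by apply: eq_bigr => l _; rewrite mxE.
rewrite Ea; have /submxP [D ->] := maxrank_evrow_sub maxr Txs rk Tx.
by rewrite -mulmxA xs_a mulmx0 mxE.
Qed.

End MaxRank.

Section Density.
Variables (k : closedFieldType) (n : nat).
Implicit Types (G H : 'M[k]_n -> Prop) (L : seq ('M[k]_n -> k)).

Lemma zdense_maxrank G H L (r : nat) :
  (forall A, H A -> G A) -> zdense_in G H ->
  (forall f, List.In f L -> poly_fun (@mxcoord k n) G f) ->
  maxrank G L r -> maxrank H L r.
Proof.
move=> HG denseH PL [[m' [ys [Gys rk_ys]]] maxG].
have [r' maxH] := ex_maxrank H L; have [[m [xs [Hxs rk_xs]]] _] := maxH.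
pose W := evmx L xs.
have G_sub A : G A -> (evrow L A <= W)%MS.
  (* Each column of the cokernel of W gives a polynomial vanishing on H, hence
     on its closure G. *)
  move=> GA; rewrite submxE; apply/eqP/rowP => j; rewrite [RHS]mxE.
  pose f B : k := (evrow L B *m cokermx W) 0 j.
  have Zclosed : mclosed_in G (fun B => G B /\ f B = 0).
    apply: (zclosed_zeros (Q := eq f)) => [_ <-|B].
      exact: span_poly_fun PL (span_evrow_mul _ _).
    by split=> -[GB fB]; split=> //; [move=> _ <- | apply: fB].
  have f_xs i : f (xs i) = 0.
    by rewrite /f -row_evmx -row_mul mulmx_coker row0 mxE.
  have f_H B : H B -> f B = 0.
    exact: maxrank_vanish maxH Hxs rk_xs (span_evrow_mul _ _) f_xs B.
  by have [] := denseH _ Zclosed (fun B HB => conj (HG _ HB) (f_H B HB)) A GA.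
have rk : \rank W = r.
  apply/eqP; rewrite eqn_leq maxG => [/=|i]; last exact/HG/Hxs.
  rewrite -rk_ys; apply/mxrankS/row_subP => i.
  by rewrite row_evmx; apply/G_sub/Gys.
by split=> [|m'' zs Hzs]; [exists m, xs | apply: maxG => i; apply: HG].
Qed.

End Density.

Inductive word (e : nat) : Type :=
| WOne
| WGen of 'I_e
| WMul of word e & word e
| WInv of word e.

Section Words.
Variables (k : closedFieldType) (n e : nat).
Implicit Types (x : 'I_e -> 'M[k]_n) (w : word e).

Fixpoint weval w x : 'M[k]_n :=
  match w with
  | WOne => 1%:M
  | WGen i => x i
  | WMul a b => weval a x *m weval b x
  | WInv a => invmx (weval a x)
  end.

Lemma weval_gen_sub w x : gen_sub x (weval w x).
Proof. by elim: w => /= [|i|a Ha b Hb|a Ha]; constructor. Qed.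

Lemma gen_sub_weval x A : gen_sub x A -> exists w, A = weval w x.
Proof.
elim=> [|i|B C _ [b ->] _ [c ->]|B _ [b ->]].
- by exists (WOne e).
- by exists (WGen i).
- by exists (WMul b c).
- by exists (WInv b).
Qed.

Variables (G : 'M[k]_n -> Prop) (c : 'I_e -> 'M[k]_n).
Hypotheses (subG : is_subgroup G) (Gc : forall i, G (c i)).

Lemma Omega_gen_subG x A : Omega G c x -> gen_sub x A -> G A.
Proof.
have [_ [G1 [GM GV]]] := subG; move=> Ox.
elim=> [|i|B C _ GB _ GC|B _ GB]; [exact: G1 | | exact: GM | exact: GV].
by have [g [Gg ->]] := Ox i; apply/GM/Gg/GM/Gc/GV.
Qed.

Fixpoint word_det w : k :=
  match w with
  | WOne => 1
  | WGen i => \det (c i)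
  | WMul a b => word_det a * word_det b
  | WInv a => (word_det a)^-1
  end.

Lemma weval_det w x : Omega G c x -> \det (weval w x) = word_det w.
Proof.
have [unitG _] := subG; move=> Ox.
elim: w => /= [|i|a <- b <-|a <-]; rewrite ?det1 ?det_mulmx ?det_inv //.
have [g [Gg ->]] := Ox i; have := unitG _ Gg; rewrite unitmxE unitfE => dg_neq0.
by rewrite !det_mulmx det_inv mulrC mulrA mulfV ?mul1r.
Qed.

(* The determinant of a word is constant on Omega, so its inverse is a constant
   multiple of the adjugate, which is polynomial. *)
Lemma weval_poly_fun w i j :
  poly_fun (@tcoord k n e) (Omega G c) (fun x => weval w x i j).
Proof.
elim: w i j => /= [|l|a IHa b IHb|a IHa] i j.
- exact: poly_fun_cst.
- exact: (poly_fun_coord _ _ (l, (i, j))).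
- apply: poly_fun_ext
    (_ : poly_fun _ _ (fun x => \sum_l weval a x i l * weval b x l j)) _.
    by apply: poly_fun_sum => l; apply: poly_fun_mul.
  by move=> x _; rewrite mxE.
- pose adj x := (-1) ^+ (j + i) * \det (row' j (col' i (weval a x))).
  apply: poly_fun_ext (_ : poly_fun _ _ (fun x => (word_det a)^-1 * adj x)) _.
    apply: poly_fun_mul (poly_fun_cst _ _ _) (poly_fun_mul (poly_fun_cst _ _ _) _).
    apply: poly_fun_det => a' b'.
    by apply: poly_fun_ext (IHa (lift j a') (lift i b')) _ => x _; rewrite !mxE.
  move=> x Ox; have [unitG _] := subG.
  have /unitG unit_a := Omega_gen_subG Ox (weval_gen_sub a x).
  by rewrite /invmx unit_a !mxE weval_det.
Qed.

End Words.

Section LowRankLocus.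
Variables (k : closedFieldType) (n e : nat).
Variables (G : 'M[k]_n -> Prop) (c : 'I_e -> 'M[k]_n).
Hypotheses (subG : is_subgroup G) (Gc : forall i, G (c i)).
Local Notation L d := (monomials (@mxcoord k n) d).

Definition word_minor (L : seq ('M[k]_n -> k)) r (ws : 'I_r -> word e)
    (f : 'I_r -> 'I_(size L)) (x : 'I_e -> 'M[k]_n) : k :=
  \det (colsub f (evmx L (fun i => weval (ws i) x))).

Definition low_rank_locus d (x : 'I_e -> 'M[k]_n) : Prop :=
  Omega G c x /\
  forall (r : nat) (ws : 'I_r -> word e) (f : 'I_r -> 'I_(size (L d))),
    maxrank G (L d) r -> word_minor ws f x = 0.

Lemma low_rank_locus_closed d :
  zclosed_in (@tcoord k n e) (Omega G c) (low_rank_locus d).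
Proof.
apply: (zclosed_zeros (Q := fun q => exists (r : nat) (ws : 'I_r -> word e)
  (f : 'I_r -> 'I_(size (L d))), maxrank G (L d) r /\ q = word_minor ws f)).
  move=> q [r [ws [f [_ ->]]]]; apply: poly_fun_det => i j.
  have [p Ep] := monomials_poly_fun (fun=> True) (nth_In (f j)).
  have := poly_fun_peval p (fun ij => weval_poly_fun subG Gc (ws i) ij.1 ij.2).
  by move=> /poly_fun_ext; apply=> x _; rewrite !mxE Ep.
move=> x; split=> -[Ox Z0]; split=> //.
  by move=> q [r [ws [f [maxG ->]]]]; apply: Z0.
by move=> r ws f maxG; apply: Z0; exists r, ws, f.
Qed.

Lemma zdense_not_low_rank d x0 :
  Omega G c x0 -> zdense_in G (gen_sub x0) -> ~ low_rank_locus d x0.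
Proof.
move=> Ox0 dense_x0 [_ minor0].
have [r maxG] := ex_maxrank G (L d).
have PL f : List.In f (L d) -> poly_fun (@mxcoord k n) G f.
  exact: monomials_poly_fun.
have [[m [xs [Hxs rk]]] _] :=
  zdense_maxrank (fun A => Omega_gen_subG subG Gc Ox0) dense_x0 PL maxG.
have [g [f unit_minor]] := exists_unit_minor rk.
have [ws Ews] := fin_all_exists (fun i => gen_sub_weval (Hxs (g i))).
have rows_ws : rowsub g (evmx (L d) xs) = evmx (L d) (fun i => weval (ws i) x0).
  by apply/matrixP => i j; rewrite !mxE Ews.
move: unit_minor; rewrite rows_ws unitmxE unitfE.
by rewrite [X in X != 0](minor0 r ws f maxG) eqxx.
Qed.

Lemma not_low_rank_zdense x :
  Omega G c x -> (forall d, ~ low_rank_locus d x) -> zdense_in G (gen_sub x).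
Proof.
move=> Ox notZ Z [S defZ] Zx A GA; apply/defZ; split=> // p Sp.
have [d span_p] := peval_in_span (@mxcoord k n) p.
have [r [ws [f [maxG /eqP minor_neq0]]]] :
    exists (r : nat) (ws : 'I_r -> word e) (f : 'I_r -> 'I_(size (L d))),
      maxrank G (L d) r /\ word_minor ws f x <> 0.
  apply: contra_notP (notZ d) => none; split=> // r ws f maxG.
  by apply: contra_notP none => minor_neq0; exists r, ws, f.
pose xs i := weval (ws i) x.
have Gxs i : G (xs i) := Omega_gen_subG subG Gc Ox (weval_gen_sub _ _).
have rk : \rank (evmx (L d) xs) = r.
  apply/eqP; rewrite eqn_leq maxG.2 //=.
  by apply: (unit_colsub_rank (f := f)); rewrite unitmxE unitfE.
apply: (maxrank_vanish maxG Gxs rk span_p _ GA) => i.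
by have /defZ [_ ->] := Zx _ (weval_gen_sub (ws i) x).
Qed.

End LowRankLocus.

Unset Implicit Arguments.

Theorem lemma2p7 (k : closedFieldType) (n e : nat)
  (G : 'M[k]_n -> Prop) (c : 'I_e -> 'M[k]_n) :
  uncountable k ->
  simple_alg_group G ->
  (forall i, G (c i)) ->
  (forall i, noncentral G (c i)) ->
  (exists x, Omega G c x /\ zdense_in G (gen_sub x)) ->
  exists Z : nat -> ('I_e -> 'M[k]_n) -> Prop,
    (forall j, proper_closed_sub (Omega G c) (Z j)) /\
    (forall x, Omega G c x -> (forall j, ~ Z j x) -> zdense_in G (gen_sub x)).
Proof.
move=> _ [[subG _] _ _ _] Gc _ [x0 [Ox0 dense_x0]].
exists (low_rank_locus G c); split=> [d|x Ox notZ].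
  split; first exact: low_rank_locus_closed.
  by exists x0; split=> //; apply: zdense_not_low_rank.
exact: not_low_rank_zdense.
Qed.
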